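(* Let $v\in\mathbb{R}^2$ and let $f\in\mathrm{CPA}_3$ be a $v$-function with three pieces. Then there are signs $\sigma_1,\sigma_2\in\{-1,1\}$ and functions $g_1,g_2,g_3$, each of which is an affine component of $f$ multiplied by $-1$ or $1$, such that $$f=\sigma_1\max\big(g_1,\sigma_2\max(g_2,g_3)\big).$$
   Context: For $v,u\in\mathbb{R}^2$, $u\ne0$: a line segment $\{v+tu:t\in[0,1]\}$, a ray $\{v+tu:t\ge0\}$ (vertex $v$), a line $\{v+tu:t\in\mathbb{R}\}$. A polygon is a closed $P\subseteq\mathbb{R}^2$ with connected interior whose boundary is the union of finitely many polygonal arcs and cycles (piecewise-linear curves built from segments, rays and lines, homeomorphic to a line or circle), any two meeting in the empty set or a common vertex. A continuous $f:\mathbb{R}^2\to\mathbb{R}$ is continuous piecewise affine (CPA) with admissible pieces $\mathcal{P}$ if $\mathcal{P}$ is a finite set of polygons covering $\mathbb{R}^2$, $P\cap Q=\partial P\cap\partial Q$ for distinct pieces, every vertex of a piece is a vertex of every piece containing it, and $f|_P=f_P$ is affine for each $P$; $f_P$ is the affine component of $P$. $\mathrm{CPA}_3$ is the set of CPA functions admitting an admissible set of $3$ pieces. A CPA function is a $v$-function if $v$ is its only vertex and all its edges are rays. *)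

From HB Require Import structures.
From mathcomp Require Import all_boot all_order all_algebra.
From mathcomp Require Import all_classical all_reals all_analysis.
Set Implicit Arguments. Unset Strict Implicit. Unset Printing Implicit Defensive.
Import Order.TTheory GRing.Theory Num.Theory.
Import numFieldNormedType.Exports.
Local Open Scope classical_set_scope.
Local Open Scope ring_scope.

Section Defs.
Variable R : realType.
Notation pt := (R * R)%type.

(* the ray {v + t u : t >= 0} with vertex v (u <> 0 required separately) *)
Definition ray (v u : pt) : set pt :=
  [set x | exists2 t : R, 0 <= t & x = (v.1 + t * u.1, v.2 + t * u.2)].

Definition bdry (A : set pt) : set pt := closure A `\` A°.

Definition is_affine (g : pt -> R) : Prop :=
  exists a b c : R, forall x, g x = a * x.1 + b * x.2 + c.

(* A polygon whose boundary consists of finitely many polygonal arcs, each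
   being the union of two distinct rays with vertex v (so v is the only vertex
   and all edges are rays), any two arcs meeting only in the vertex v. *)
Definition v_polygon (v : pt) (P : set pt) : Prop :=
  closed P /\ P° !=set0 /\ connected P° /\
  exists (n : nat) (u w : 'I_n -> pt),
    (forall k, u k != (0, 0) /\ w k != (0, 0) /\ ray v (u k) != ray v (w k)) /\
    (forall k l, k != l ->
       (ray v (u k) `|` ray v (w k)) `&` (ray v (u l) `|` ray v (w l)) = [set v]) /\
    bdry P = \bigcup_(k in [set: 'I_n]) (ray v (u k) `|` ray v (w k)).

Definition v_function3 (v : pt) (f : pt -> R)
    (P : 'I_3 -> set pt) (F : 'I_3 -> pt -> R) : Prop :=
  continuous f /\
  (forall i, v_polygon v (P i)) /\
  \bigcup_(i in [set: 'I_3]) P i = [set: pt] /\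
  (forall i j, i != j -> P i `&` P j = bdry (P i) `&` bdry (P j)) /\
  (forall i, is_affine (F i) /\ forall x, P i x -> f x = F i x).

Definition signed_comp (F : 'I_3 -> pt -> R) (g : pt -> R) : Prop :=
  exists (i : 'I_3) (e : R), (e = 1 \/ e = -1) /\ forall x, g x = e * F i x.

End Defs.

(* Along a segment [x, y], a continuous selection f of affine functions has a
   component below f at x and above f at y: follow, by a supremum argument, the
   components that start below f.  Hence if two components lie strictly below f
   at some point, the third one lies below f everywhere, and symmetrically; and
   a component lying on one side of f everywhere yields one of the nested max
   forms by a short case analysis.  In the remaining case f x is the median of
   the three values F0 x, F1 x, F2 x.  Put D1 = F0 - F1 and D2 = F0 - F2, which
   vanish at the common vertex v.  As f = F0 on the piece P0 and f is F1 or F2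
   elsewhere, P0 lies in {D1 D2 <= 0} and contains {D1 D2 < 0}.  If f < F0 at
   some point, D1 and D2 are both positive there, and both negative at its
   reflection through v; moving slightly from an interior point of P0 towards
   these points shows that D1 does not vanish on the interior of P0.  But the
   reflection through v exchanges the two halves of the open double wedge
   {D1 D2 < 0}, so D1 takes both signs on the connected interior of P0.
   Hence F0 <= f. *)

From HB Require Import structures.
From mathcomp Require Import all_boot all_order all_algebra.
From mathcomp Require Import all_classical all_reals all_analysis.
From mathcomp Require Import ring lra.
Set Implicit Arguments.
Unset Strict Implicit.
Unset Printing Implicit Defensive.
Import Order.TTheory GRing.Theory Num.Theory.
Import numFieldNormedType.Exports.
Local Open Scope classical_set_scope.
Local Open Scope ring_scope.

Lemma ord3_cases (a b c : 'I_3) :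
  a != b -> a != c -> b != c -> forall i, [\/ i = a, i = b | i = c].
Proof.
case: a b c => [[|[|[|?]]] ?] [[|[|[|?]]] ?] [[|[|[|?]]] ?] //= ? ? ?;
case => [[|[|[|?]]] ?] //=; by [ apply: Or31; apply: ord_inj
                               | apply: Or32; apply: ord_inj
                               | apply: Or33; apply: ord_inj ].
Qed.

Lemma ord3_others (a : 'I_3) : exists b c : 'I_3, [/\ a != b, a != c & b != c].
Proof.
case: a => [[|[|[|?]]] ?] //.
- by exists (Ordinal (isT : (1 < 3)%N)), (Ordinal (isT : (2 < 3)%N)).
- by exists ord0, (Ordinal (isT : (2 < 3)%N)).
- by exists ord0, (Ordinal (isT : (1 < 3)%N)).
Qed.

Ltac case_max := repeat match goal with |- context [Num.max ?u ?v] =>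
  lazymatch u with context [Num.max _ _] => fail | _ =>
  lazymatch v with context [Num.max _ _] => fail | _ =>
    case: (leP u v) => ? end end end.

Section NestedMaxForm.
Variables (R : realDomainType) (T : Type).
Implicit Types (F : 'I_3 -> T -> R) (f g : T -> R).

(* The [signed_comp] of the theorem, for functions on an arbitrary type. *)
Definition signed_component F g :=
  exists (i : 'I_3) (e : R), (e = 1 \/ e = -1) /\ forall x, g x = e * F i x.

Definition nested_max_form F f :=
  exists (s1 s2 : R) (g1 g2 g3 : T -> R),
    (s1 = 1 \/ s1 = -1) /\ (s2 = 1 \/ s2 = -1) /\
    signed_component F g1 /\ signed_component F g2 /\ signed_component F g3 /\
    forall x, f x = s1 * Num.max (g1 x) (s2 * Num.max (g2 x) (g3 x)).

Definition selection_of F f := forall x, exists i, f x = F i x.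

Definition crossing F f := forall x y, exists i, F i x <= f x /\ f y <= F i y.

Definition one_sided F f :=
  exists a, (forall x, f x <= F a x) \/ (forall x, F a x <= f x).

Definition median_of F f := forall x (i j : 'I_3), i != j ->
  ~ (f x < F i x /\ f x < F j x) /\ ~ (F i x < f x /\ F j x < f x).

Lemma forall_le_or_exists_gt f g : (forall x, f x <= g x) \/ exists x, g x < f x.
Proof.
have [|/existsNP [x]] := pselect (forall x, f x <= g x); first by left.
by right; exists x; rewrite ltNge; exact/negP.
Qed.

Lemma median_prod_le0 (w p q : R) :
  ~ (w < p /\ w < q) -> ~ (p < w /\ q < w) -> (w - p) * (w - q) <= 0.
Proof.
move=> not_below not_above; rewrite leNgt; apply/negP => pos.
have [wp|pw|wp] := ltrgtP w p; last by rewrite wp subrr mul0r ltxx in pos.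
- by apply: not_below; split => //; nra.
- by apply: not_above; split => //; nra.
Qed.

Lemma signed_component_id F i : signed_component F (F i).
Proof. by exists i, 1; split; [left | move=> x; rewrite mul1r]. Qed.

Lemma signed_component_opp F i : signed_component F (\- F i).
Proof. by exists i, (-1); split; [right | move=> x; rewrite mulN1r]. Qed.

Lemma signed_component_of_opp F g :
  signed_component (fun i => \- F i) g -> signed_component F g.
Proof.
move=> [i [e [e_sign ge]]]; exists i, (- e); split.
  by case: e_sign => ->; [right | left; rewrite opprK].
by move=> x; rewrite ge /= mulrN mulNr.
Qed.

Lemma nested_max_form_of_opp F f :
  nested_max_form (fun i => \- F i) (\- f) -> nested_max_form F f.
Proof.
move=> [s1 [s2 [g1 [g2 [g3 [s1_sign [s2_sign [g1F [g2F [g3F fE]]]]]]]]]].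
exists (- s1), s2, g1, g2, g3; split.
  by case: s1_sign => ->; [right | left; rewrite opprK].
do 4 (split; first by [|exact: signed_component_of_opp]).
by move=> x; rewrite mulNr -fE opprK.
Qed.

Lemma selection_opp F f : selection_of F f -> selection_of (fun i => \- F i) (\- f).
Proof. by move=> sel x; have [i fE] := sel x; exists i; rewrite /= fE. Qed.

Lemma crossing_opp F f : crossing F f -> crossing (fun i => \- F i) (\- f).
Proof. by move=> cr x y; have [i [iy ix]] := cr y x; exists i; rewrite /= !lerN2. Qed.

Lemma crossing_two_below F f (i j k : 'I_3) y :
  crossing F f -> i != j -> F i y < f y -> F j y < f y -> f y = F k y ->
  forall x, F k x <= f x.
Proof.
move=> cr ij iy jy ky x; have [l [lx ly]] := cr x y.
have ik : i != k by apply: contraTneq iy => ->; rewrite ky ltxx.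
have jk : j != k by apply: contraTneq jy => ->; rewrite ky ltxx.
by case: (ord3_cases ij ik jk l) => el; rewrite el in lx ly => //; lra.
Qed.

Lemma crossing_two_above F f (i j k : 'I_3) y :
  crossing F f -> i != j -> f y < F i y -> f y < F j y -> f y = F k y ->
  forall x, f x <= F k x.
Proof.
move=> cr ij iy jy ky x; rewrite -lerN2.
apply: (crossing_two_below (crossing_opp cr) ij (y := y)) => /=; rewrite ?ltrN2 //.
by rewrite ky.
Qed.

Lemma one_sided_or_median F f :
  selection_of F f -> crossing F f -> one_sided F f \/ median_of F f.
Proof.
move=> sel cr; have [med|not_med] := pselect (median_of F f); [by right | left].
have [x [i [j [ij two]]]] : exists x i j, i != j /\
    ((f x < F i x /\ f x < F j x) \/ (F i x < f x /\ F j x < f x)).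
  apply: contrapT => none; apply: not_med => x i j ij.
  by split => two; apply: none; exists x, i, j; tauto.
have [k fk] := sel x; exists k.
case: two => [[ix jx] | [ix jx]]; [left | right].
- exact: crossing_two_above cr ij ix jx fk.
- exact: crossing_two_below cr ij ix jx fk.
Qed.

Lemma nested_max_form_of_le F f a : selection_of F f -> crossing F f ->
  (forall x, f x <= F a x) -> nested_max_form F f.
Proof.
move=> sel cr le_a; have [b [c [ab ac bc]]] := ord3_others a.
have sel3 x : [\/ f x = F a x, f x = F b x | f x = F c x].
  by have [i ->] := sel x; case: (ord3_cases ab ac bc i) => ->;
    [apply: Or31 | apply: Or32 | apply: Or33].
have cr3 x y : [\/ F a x <= f x /\ f y <= F a y, F b x <= f x /\ f y <= F b y
                 | F c x <= f x /\ f y <= F c y].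
  by have [i ?] := cr x y; case: (ord3_cases ab ac bc i) => ei; subst i;
    [apply: Or31 | apply: Or32 | apply: Or33].
have [[y [Fby Fcy]] | not_bc] := pselect (exists y, F b y < f y /\ F c y < f y).
  have ge_a x : F a x <= f x by case: (cr3 x y) => [[]|[_ ?]|[_ ?]] //; lra.
  exists 1, 1, (F a), (F a), (F a).
  do !split; try by [left | exact: signed_component_id].
  by move=> x; rewrite !mul1r !maxxx; apply/eqP; rewrite eq_le le_a ge_a.
have le_bc x : f x <= F b x \/ f x <= F c x.
  case: (lerP (f x) (F b x)) => [|bx]; first by left.
  by case: (lerP (f x) (F c x)) => [|cx]; [right | case: not_bc; exists x].
have [le_b|[yb yb_lt]] := forall_le_or_exists_gt f (F b);
have [le_c|[yc yc_lt]] := forall_le_or_exists_gt f (F c).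
- (* f = min (F a) (min (F b) (F c)) *)
  exists (-1), 1, (\- F a), (\- F b), (\- F c).
  do !split; try by [left | right | exact: signed_component_opp].
  by move=> x /=; have := le_a x; have := le_b x; have := le_c x; case: (sel3 x);
    case_max => *; lra.
- have ab_le x : F a x <= f x \/ F b x <= f x.
    by case: (cr3 x yc) => [[]|[]|[_ ?]]; [left | right | lra].
  (* f = min (F a) (F b) *)
  exists (-1), 1, (\- F a), (\- F b), (\- F b).
  do !split; try by [left | right | exact: signed_component_opp].
  by move=> x /=; have := le_a x; have := le_b x; case: (ab_le x); case_max => *; lra.
- have ac_le x : F a x <= f x \/ F c x <= f x.
    by case: (cr3 x yb) => [[]|[_ ?]|[]]; [left | lra | right].
  (* f = min (F a) (F c) *)
  exists (-1), 1, (\- F a), (\- F c), (\- F c).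
  do !split; try by [left | right | exact: signed_component_opp].
  by move=> x /=; have := le_a x; have := le_c x; case: (ac_le x); case_max => *; lra.
- have ab_le x : F a x <= f x \/ F b x <= f x.
    by case: (cr3 x yc) => [[]|[]|[_ ?]]; [left | right | lra].
  have ac_le x : F a x <= f x \/ F c x <= f x.
    by case: (cr3 x yb) => [[]|[_ ?]|[]]; [left | lra | right].
  (* f = min (F a) (max (F b) (F c)) *)
  exists (-1), (-1), (\- F a), (F b), (F c).
  do !split;
    try by [left | right | exact: signed_component_id | exact: signed_component_opp].
  move=> x /=; have := le_a x; have := le_bc x; have := ab_le x; have := ac_le x.
  by case_max => -[?|?] [?|?] [?|?] ?; lra.
Qed.

Lemma nested_max_form_of_ge F f a : selection_of F f -> crossing F f ->
  (forall x, F a x <= f x) -> nested_max_form F f.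
Proof.
move=> sel cr ge_a; apply: nested_max_form_of_opp.
apply: (nested_max_form_of_le (selection_opp sel) (crossing_opp cr) (a := a)).
by move=> x /=; rewrite lerN2.
Qed.

Lemma nested_max_form_of_one_sided F f : selection_of F f -> crossing F f ->
  one_sided F f -> nested_max_form F f.
Proof.
move=> sel cr [a [le_a | ge_a]];
  [exact: nested_max_form_of_le le_a | exact: nested_max_form_of_ge ge_a].
Qed.

End NestedMaxForm.

Section SignSets.
Variables (R : realType) (T : topologicalType) (g : T -> R).
Hypothesis g_cont : continuous g.

Lemma open_gt0 : open [set x | 0 < g x].
Proof.
apply: (open_comp (f := g) (D := [set r | 0 < r])) => [x _|]; first exact: g_cont.
exact: open_gt.
Qed.

Lemma open_lt0 : open [set x | g x < 0].
Proof.
apply: (open_comp (f := g) (D := [set r | r < 0])) => [x _|]; first exact: g_cont.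
exact: open_lt.
Qed.

Lemma closed_ge0 : closed [set x | 0 <= g x].
Proof.
apply: (preimage_closed (f := g) (D := [set r | 0 <= r])) => [x _|].
  exact: g_cont.
exact: closed_ge.
Qed.

End SignSets.

Section LineSelection.
Variables (R : realType) (I : finType) (a b : I -> R) (phi : R -> R).
Hypothesis phi_cont : continuous phi.
Hypothesis phi_sel : forall t, exists k, phi t = a k * t + b k.

Let line_continuous k : continuous (fun t => a k * t + b k).
Proof.
by move=> t; apply: cvgD; [apply: cvgMr; exact: cvg_id | exact: cvg_cst].
Qed.

Let crossed_at t := exists k, b k <= phi 0 /\ phi t <= a k * t + b k.

Let crossed_at_closed : closed crossed_at.
Proof.
have -> : crossed_at =
    \bigcup_(k in [set k | b k <= phi 0]) [set t | 0 <= a k * t + b k - phi t].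
  apply/seteqP; split => t [k]; first by move=> [? ?]; exists k => //=; rewrite subr_ge0.
  by rewrite /= subr_ge0; exists k.
apply: closed_bigcup => [|k _]; first exact: finite_finset.
by apply: closed_ge0 => t; apply: cvgB; [exact: line_continuous | exact: phi_cont].
Qed.

Let crossed_at_right s :
  0 <= s -> crossed_at s -> \forall t \near s^'+, crossed_at t.
Proof.
move=> s0 [k0 [bk0 hk0]].
have off_s : \forall t \near s,
    forall k, phi s != a k * s + b k -> phi t != a k * t + b k.
  apply: (@filter_forall _ _ _ (nbhs s) _) => k.
  have [_|ne] := eqVneq (phi s) (a k * s + b k); first by near=> t.
  have lim : (fun t => phi t - (a k * t + b k)) @ s --> phi s - (a k * s + b k).
    by apply: cvgB; [exact: phi_cont | exact: line_continuous].
  have := cvgr_neq0 _ lim; rewrite subr_eq0 => /(_ _ ne).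
  by apply: filterS => t; rewrite subr_eq0 => ? _.
near=> t.
have s_t : s < t by near: t; exact: nbhs_right_gt.
have off_t : forall k, phi s != a k * s + b k -> phi t != a k * t + b k.
  by near: t; apply: cvg_within; exact: off_s.
have [k sel_t] := phi_sel t.
have [bk|bk] := lerP (b k) (phi 0); first by exists k; rewrite sel_t.
exists k0; split => //; rewrite sel_t.
have phi_s : phi s = a k * s + b k.
  by apply/eqP; apply: contraT => /off_t; rewrite sel_t eqxx.
have s_pos : 0 < s.
  rewrite lt_def s0 andbT; apply: contraTneq bk => s_0.
  by rewrite -leNgt -s_0 phi_s s_0 mulr0 add0r.
(* [k] starts above [k0] at 0 but not at s > 0, so it is below [k0] after s. *)
nra.
Unshelve. all: by end_near.
Qed.

Lemma line_selection_crossing : exists k, b k <= phi 0 /\ phi 1 <= a k + b k.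
Proof.
pose E := `[0, 1] `&` crossed_at.
suff [_ [k [bk hk]]] : E 1 by exists k; rewrite mulr1 in hk.
have E0 : E 0.
  split; first by rewrite /= in_itv /= lexx ler01.
  by have [k hk] := phi_sel 0; exists k; rewrite hk mulr0 add0r lexx.
have supE : has_sup E.
  by split; [exists 0 | exists 1 => t [/=]; rewrite in_itv => /andP[]].
have Es : E (sup E).
  apply: itv_closed_supremums; first by exists 0.
    by apply: closedI; [exact: itv_closed | exact: crossed_at_closed].
  by split; [exact: sup_upper_bound | move=> u; apply: ge_sup; exists 0].
set s := sup E in Es *.
have [s0 s1] : 0 <= s /\ s <= 1 by case: Es => /=; rewrite in_itv /= => /andP.
suff <- : s = 1 by [].
apply/eqP; rewrite eq_le s1 leNgt; apply/negP => s_lt1.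
have : \forall t \near s^'+, [/\ crossed_at t, t < 1 & s < t].
  near=> t; split.
  - by near: t; exact: crossed_at_right Es.2.
  - by near: t; exact: nbhs_right_lt.
  - by near: t; exact: nbhs_right_gt.
move=> /(filter_ex (FF := at_right_proper_filter s)) [t [gt t1 st]].
have : t <= s.
  by apply: sup_upper_bound => //; split => //=; rewrite in_itv /= (ltW t1) andbT; lra.
by rewrite leNgt st.
Unshelve. all: by end_near.
Qed.
End LineSelection.

Lemma connected_sign_constant (R : realType) (T : topologicalType)
    (A : set T) (g : T -> R) :
  connected A -> continuous g -> (forall x, A x -> g x != 0) ->
  forall x y, A x -> A y -> 0 < g x -> 0 < g y.
Proof.
move=> A_conn g_cont g_neq0 x y Ax Ay gx.
suff : (A `&` [set z | 0 < g z]) y by case.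
rewrite (A_conn (A `&` [set z | 0 < g z])) //.
- by exists x.
- by exists [set z | 0 < g z]; first exact: open_gt0.
- exists [set z | 0 <= g z]; first exact: closed_ge0.
  apply/seteqP; split => z [Az gz]; split => //=; first exact: ltW.
  by rewrite lt_def g_neq0.
Qed.

Section Plane.
Variable R : realType.
Notation pt := (R * R)%type.
Implicit Types (g h D : pt -> R) (v x y z : pt).

Lemma affine_continuous g : is_affine g -> continuous g.
Proof.
move=> [a [b [c /funext ->]]] x; apply: cvgD; last exact: cvg_cst.
by apply: cvgD; apply: cvgMr; [exact: cvg_fst | exact: cvg_snd].
Qed.

Lemma affineB g h : is_affine g -> is_affine h -> is_affine (g \- h).
Proof.
move=> [a [b [c gE]]] [a' [b' [c' hE]]].
by exists (a - a'), (b - b'), (c - c') => x; rewrite /= gE hE; ring.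
Qed.

Lemma affine_segment g x z t : is_affine g ->
  g (x + t *: (z - x)) = g x + t * (g z - g x).
Proof. by move=> [a [b [c gE]]]; rewrite !gE /= /GRing.scale /=; ring. Qed.

Lemma affine_reflect g v x : is_affine g -> g (2 *: v - x) = 2 * g v - g x.
Proof. by move=> [a [b [c gE]]]; rewrite !gE /= /GRing.scale /=; ring. Qed.

Lemma segment_continuous x z : continuous (fun t : R => x + t *: (z - x)).
Proof. by move=> t; apply: cvgD; [exact: cvg_cst | apply: cvgZr_tmp; exact: cvg_id]. Qed.

Lemma near_segment (A : set pt) x z : nbhs x A ->
  exists2 t : R, 0 < t < 1 & A (x + t *: (z - x)).
Proof.
move=> Ax; have : \forall t \near 0^'+, [/\ A (x + t *: (z - x)), 0 < t & t < 1].
  near=> t; split.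
  - near: t; apply: cvg_within; apply: segment_continuous.
    by rewrite scale0r addr0.
  - by near: t; exact: nbhs_right_gt.
  - by near: t; exact: nbhs_right_lt.
move=> /(filter_ex (FF := at_right_proper_filter 0)) [t [At t0 t1]].
by exists t; first exact/andP.
Unshelve. all: by end_near.
Qed.

Lemma selection_crossing (f : pt -> R) (F : 'I_3 -> pt -> R) :
  continuous f -> (forall i, is_affine (F i)) -> selection_of F f -> crossing F f.
Proof.
move=> f_cont F_affine sel x y.
have f_seg_cont : continuous (fun t : R => f (x + t *: (y - x))).
  by move=> t; apply: continuous_comp; [exact: segment_continuous | exact: f_cont].
have f_seg_sel t : exists k, f (x + t *: (y - x)) = (F k y - F k x) * t + F k x.
  have [k ->] := sel (x + t *: (y - x)).
  by exists k; rewrite affine_segment // addrC mulrC.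
have [k [Fkx Fky]] := line_selection_crossing f_seg_cont f_seg_sel.
by exists k; rewrite scale0r addr0 in Fkx; rewrite scale1r [x + _]addrC !subrK in Fky.
Qed.

Lemma double_wedge_interior_neq0 (Q : set pt) D1 D2 y z x :
  is_affine D1 -> is_affine D2 -> (forall x, Q x -> D1 x * D2 x <= 0) ->
  D1 y < 0 -> D2 y < 0 -> 0 < D1 z -> 0 < D2 z -> Q° x -> D1 x != 0.
Proof.
move=> D1a D2a Q_le0 D1y D2y D1z D2z Qx; apply/eqP => D1x.
have [D2x|D2x] := lerP 0 (D2 x).
- have [t /andP[t0 t1] Qt] := near_segment z Qx.
  have := Q_le0 _ Qt; rewrite !affine_segment // D1x leNgt => /negP; apply.
  by apply: mulr_gt0; nra.
- have [t /andP[t0 t1] Qt] := near_segment y Qx.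
  have := Q_le0 _ Qt; rewrite !affine_segment // D1x leNgt => /negP; apply.
  by rewrite -[_ * _]mulrNN; apply: mulr_gt0; nra.
Qed.

Lemma double_wedge_nonpos (Q : set pt) D1 D2 v :
  is_affine D1 -> is_affine D2 -> D1 v = 0 -> D2 v = 0 ->
  Q° !=set0 -> connected Q° ->
  (forall x, Q x -> D1 x * D2 x <= 0) -> (forall x, D1 x * D2 x < 0 -> Q x) ->
  forall z, D1 z <= 0 \/ D2 z <= 0.
Proof.
move=> D1a D2a D1v D2v [x0 Qx0] Q_conn Q_le0 Q_lt0 z.
have reflect D x : is_affine D -> D v = 0 -> D (2 *: v - x) = - D x.
  by move=> Da Dv; rewrite affine_reflect // Dv mulr0 sub0r.
have [|D1z] := lerP (D1 z) 0; first by left.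
have [|D2z] := lerP (D2 z) 0; first by right.
exfalso; pose y := 2 *: v - z.
have [D1y D2y] : D1 y < 0 /\ D2 y < 0 by rewrite !reflect // !oppr_lt0.
have D1_neq0 x : Q° x -> D1 x != 0.
  exact: double_wedge_interior_neq0 D1a D2a Q_le0 D1y D2y D1z D2z.
have D2_neq0 x : Q° x -> D2 x != 0.
  apply: double_wedge_interior_neq0 D2a D1a _ D2y D1y D2z D1z.
  by move=> ? /Q_le0; rewrite mulrC.
have x0_lt0 : D1 x0 * D2 x0 < 0.
  by rewrite lt_neqAle mulf_neq0 ?D1_neq0 ?D2_neq0 ?Q_le0 //; exact: interior_subset.
pose x1 := 2 *: v - x0.
have Qx1 : Q° x1.
  have : [set x | D1 x * D2 x < 0] `<=` Q°.
    rewrite -open_subsetE //; apply: open_lt0 => x.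
    by apply: cvgM; apply: affine_continuous.
  by apply; rewrite /= !reflect // mulrNN.
have := connected_sign_constant Q_conn (affine_continuous D1a) D1_neq0.
have [D1x0|D1x0] := ltrP 0 (D1 x0).
- by move=> /(_ _ _ Qx0 Qx1 D1x0); rewrite reflect // oppr_gt0 ltNge (ltW D1x0).
- have D1x0_lt0 : D1 x0 < 0 by rewrite lt_neqAle D1_neq0.
  move=> /(_ _ _ Qx1 Qx0); rewrite reflect // oppr_gt0 => /(_ D1x0_lt0).
  by rewrite ltNge D1x0.
Qed.

Lemma clopen_plane (A : set pt) : open A -> closed A -> A !=set0 -> A = setT.
Proof.
move=> A_open A_closed [x Ax]; apply/seteqP; split => // y _.
pose S := (fun t : R => x + t *: (y - x)) @` `[0, 1].
have S_conn : connected S.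
  apply: connected_continuous_connected; first exact: segment_connected.
  exact/continuous_subspaceT/segment_continuous.
have SA : S `&` A = S.
  apply: S_conn; last 2 first.
  - by exists A.
  - by exists A.
  by exists x; split => //; exists 0; rewrite /= ?in_itv /= ?lexx ?ler01 // scale0r addr0.
have : S y by exists 1; rewrite /= ?in_itv /= ?lexx ?ler01 // scale1r addrC subrK.
by rewrite -SA => -[].
Qed.

Section VFunction.
Variables (v : pt) (f : pt -> R) (P : 'I_3 -> set pt) (F : 'I_3 -> pt -> R).
Hypothesis vf : v_function3 v f P F.

Lemma v_function3_selection : selection_of F f.
Proof.
have [_ [_ [Pcover [_ Fcomp]]]] := vf.
move=> x; have : (\bigcup_(i in [set: 'I_3]) P i) x by rewrite Pcover.
by move=> [i _ Pix]; exists i; exact: (Fcomp i).2.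
Qed.

Lemma v_function3_vertex i : P i v.
Proof.
have [_ [Ppoly [_ [Pmeet _]]]] := vf.
have [Pclosed [[x Px] [_ [n [u [w [_ [_ Pbdry]]]]]]]] := Ppoly i.
case: n u w Pbdry => [|n] u w Pbdry; last first.
  have : bdry (P i) v.
    rewrite Pbdry; exists ord0 => //; left; exists 0 => //.
    by rewrite !mul0r !addr0; case: (v).
  by move=> [Pv _]; rewrite (closure_id (P i)).1.
(* Without boundary arcs [P i] would be clopen, hence the whole plane. *)
have bdry0 : bdry (P i) = set0 by rewrite Pbdry; apply/seteqP; split => // y [[]].
have P_open : open (P i).
  rewrite openE => y Py; apply: contrapT => Py_int.
  suff : bdry (P i) y by rewrite bdry0.
  by split => //; exact: subset_closure.
have P_full := clopen_plane P_open Pclosed (ex_intro _ x (interior_subset Px)).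
have [j [_ [ij _ _]]] := ord3_others i.
have [_ [[y Pjy] _]] := Ppoly j.
have : (P i `&` P j) y by rewrite P_full; split => //; exact: interior_subset.
by rewrite Pmeet // bdry0 set0I.
Qed.

Lemma v_function3_median_ge : median_of F f -> forall a x, F a x <= f x.
Proof.
move=> med a; have [_ [Ppoly [Pcover [_ Fcomp]]]] := vf.
have [b [c [ab ac bc]]] := ord3_others a.
have Fv i : F i v = f v by rewrite (Fcomp i).2 //; exact: v_function3_vertex.
have [_ [Pa_int [Pa_conn _]]] := Ppoly a.
have sign z : (F a \- F b) z <= 0 \/ (F a \- F c) z <= 0.
  apply: (double_wedge_nonpos (Q := P a) (v := v)) => //.
  - exact: affineB (Fcomp a).1 (Fcomp b).1.
  - exact: affineB (Fcomp a).1 (Fcomp c).1.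
  - by rewrite /= !Fv subrr.
  - by rewrite /= !Fv subrr.
  - move=> x Pax; have [below above] := med x b c bc.
    by rewrite /= -((Fcomp a).2 x Pax); exact: median_prod_le0.
  - move=> x prod_lt0.
    have [i _ Pix] : (\bigcup_(i in [set: 'I_3]) P i) x by rewrite Pcover.
    have fx := (Fcomp i).2 x Pix.
    case: (ord3_cases ab ac bc i) => ei; rewrite {}ei in Pix fx => //.
    + have [below above] := med x a c ac; have := median_prod_le0 below above.
      by rewrite fx /= in prod_lt0 *; have := sqr_ge0 (F b x - F a x); nra.
    + have [below above] := med x a b ab; have := median_prod_le0 below above.
      by rewrite fx /= in prod_lt0 *; have := sqr_ge0 (F c x - F a x); nra.
move=> x; rewrite leNgt; apply/negP => fx.
have [[below_b _] [below_c _]] := (med x a b ab, med x a c ac).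
by case: (sign x) => /=; rewrite subr_le0 => ?;
  [apply: below_b | apply: below_c]; split => //; lra.
Qed.

End VFunction.

End Plane.

Theorem lemma4p4 (R : realType) (v : R * R) (f : R * R -> R)
    (P : 'I_3 -> set (R * R)) (F : 'I_3 -> R * R -> R) :
  v_function3 v f P F ->
  exists (s1 s2 : R) (g1 g2 g3 : R * R -> R),
    (s1 = 1 \/ s1 = -1) /\ (s2 = 1 \/ s2 = -1) /\
    signed_comp F g1 /\ signed_comp F g2 /\ signed_comp F g3 /\
    forall x, f x = s1 * Num.max (g1 x) (s2 * Num.max (g2 x) (g3 x)).
Proof.
move=> vf; have [f_cont [_ [_ [_ Fcomp]]]] := vf.
have sel := v_function3_selection vf.
have cr := selection_crossing f_cont (fun i => (Fcomp i).1) sel.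
have one : one_sided F f.
  have [//|med] := one_sided_or_median sel cr.
  by exists ord0; right; exact: v_function3_median_ge vf med ord0.
exact: nested_max_form_of_one_sided sel cr one.
Qed.
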